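(* Let $V$ be a finite dimensional normed vector space, $H\le O(V)$, and $(V,H,L_i)$ holonomic spaces whose holonomic metrics $d_{L_i}$ converge uniformly on compact sets to a semi-metric $d_\infty$. Suppose there is $c>0$ with $c\le\mathrm{HolRad}_i(0)$ for all $i$, where $\mathrm{HolRad}_i(0)$ is the holonomy radius at $0$ of $(V,H,L_i)$. Then $d_\infty$ is nondegenerate, i.e. a metric.
   Context: $O(V)$: norm-preserving linear maps. Group-norm on $H$: $L\ge0$, $L(a)=0$ iff $a=e$, $L(a^{-1})=L(a)$, $L(ab)\le L(a)+L(b)$. Holonomic space $(V,H,L)$: $H\le O(V)$, $L$ a group-norm, such that for every $u$ there is $R>0$ with $\|v-w\|^2-\|av-w\|^2\le L(a)^2$ for all $a\in H$ and $\|u-v\|,\|u-w\|<R$; holonomic metric $d_L(u,v)=\inf_{a\in H}\sqrt{L(a)^2+\|au-v\|^2}$. Holonomy radius at $u$: the supremum of $R>0$ such that $d_L(v,w)=\|v-w\|$ for all $v,w$ in the norm ball of radius $R$ about $u$. *)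

From Stdlib Require Import Reals Lra List Classical ClassicalEpsilon FunctionalExtensionality.
From Stdlib Require Vectors.Fin.
Open Scope R_scope.

(* A finite dimensional real normed space is modelled (up to linear isometry)
   as R^n = (Fin.t n -> R) equipped with an arbitrary norm N. *)
Definition vec (n : nat) : Type := Fin.t n -> R.

Definition vzero {n} : vec n := fun _ => 0.
Definition vadd {n} (u v : vec n) : vec n := fun k => u k + v k.
Definition vscale {n} (a : R) (u : vec n) : vec n := fun k => a * u k.
Definition vsub {n} (u v : vec n) : vec n := fun k => u k - v k.

Definition is_norm {n} (N : vec n -> R) : Prop :=
  (forall x, 0 <= N x) /\
  (forall x, N x = 0 -> x = vzero) /\
  (forall a x, N (vscale a x) = Rabs a * N x) /\
  (forall x y, N (vadd x y) <= N x + N y).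

Definition is_linear {n} (f : vec n -> vec n) : Prop :=
  (forall u v, f (vadd u v) = vadd (f u) (f v)) /\
  (forall a u, f (vscale a u) = vscale a (f u)).

Definition in_O {n} (N : vec n -> R) (f : vec n -> vec n) : Prop :=
  is_linear f /\ forall v, N (f v) = N v.

Definition subgroup_O {n} (N : vec n -> R) (H : (vec n -> vec n) -> Prop) : Prop :=
  (forall a, H a -> in_O N a) /\
  H (fun v => v) /\
  (forall a b, H a -> H b -> H (fun v => a (b v))) /\
  (forall a, H a -> exists b, H b /\ (forall v, b (a v) = v) /\ (forall v, a (b v) = v)).

Definition group_norm {n} (H : (vec n -> vec n) -> Prop) (L : (vec n -> vec n) -> R) : Prop :=
  (forall a, H a -> 0 <= L a) /\
  (forall a, H a -> (L a = 0 <-> a = (fun v => v))) /\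
  (forall a b, H a -> H b -> (forall v, b (a v) = v) -> (forall v, a (b v) = v) -> L b = L a) /\
  (forall a b, H a -> H b -> L (fun v => a (b v)) <= L a + L b).

Definition holonomic {n} (N : vec n -> R) (H : (vec n -> vec n) -> Prop)
  (L : (vec n -> vec n) -> R) : Prop :=
  subgroup_O N H /\ group_norm H L /\
  forall u : vec n, exists R0, 0 < R0 /\
    forall a v w, H a -> N (vsub u v) < R0 -> N (vsub u w) < R0 ->
      (N (vsub v w))^2 - (N (vsub (a v) w))^2 <= (L a)^2.

Definition is_lower_bound (E : R -> Prop) (m : R) : Prop := forall x, E x -> m <= x.
Definition is_glb (E : R -> Prop) (m : R) : Prop :=
  is_lower_bound E m /\ (forall b, is_lower_bound E b -> b <= m).
Definition infR (E : R -> Prop) : R := epsilon (inhabits 0) (fun m => is_glb E m).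

Definition holonomic_metric {n} (N : vec n -> R) (H : (vec n -> vec n) -> Prop)
  (L : (vec n -> vec n) -> R) (u v : vec n) : R :=
  infR (fun r => exists a, H a /\ r = sqrt ((L a)^2 + (N (vsub (a u) v))^2)).

(* c <= HolRad(u), where HolRad(u) = sup of the R > 0 such that
   d_L(v,w) = ||v - w|| on the ball of radius R about u (sup possibly +oo):
   every r < c is exceeded by an element of that set. *)
Definition holrad_ge {n} (N : vec n -> R) (H : (vec n -> vec n) -> Prop)
  (L : (vec n -> vec n) -> R) (u : vec n) (c : R) : Prop :=
  forall r, r < c -> exists R0, r < R0 /\ 0 < R0 /\
    forall v w, N (vsub u v) < R0 -> N (vsub u w) < R0 ->
      holonomic_metric N H L v w = N (vsub v w).

Definition semi_metric {n} (d : vec n -> vec n -> R) : Prop :=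
  (forall x y, 0 <= d x y) /\ (forall x, d x x = 0) /\
  (forall x y, d x y = d y x) /\ (forall x y z, d x z <= d x y + d y z).

Definition open_VV {n} (N : vec n -> R) (U : vec n * vec n -> Prop) : Prop :=
  forall p, U p -> exists e, 0 < e /\ forall q,
    Rmax (N (vsub (fst q) (fst p))) (N (vsub (snd q) (snd p))) < e -> U q.

Definition compact_VV {n} (N : vec n -> R) (K : vec n * vec n -> Prop) : Prop :=
  forall (I : Type) (U : I -> vec n * vec n -> Prop),
    (forall i, open_VV N (U i)) ->
    (forall p, K p -> exists i, U i p) ->
    exists l : list I, forall p, K p -> exists i, In i l /\ U i p.

Definition unif_conv_compacts {n} (N : vec n -> R) (d : nat -> vec n -> vec n -> R)
  (dinf : vec n -> vec n -> R) : Prop :=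
  forall K, compact_VV N K -> forall eps, 0 < eps -> exists i0, forall i, (i0 <= i)%nat ->
    forall p, K p -> Rabs (d i (fst p) (snd p) - dinf (fst p) (snd p)) < eps.

(* Near 0 the holonomy radius forces [d_L(v, a v) = ||v - a v||], while [d_L(v, a v) <= L(a)];
   rescaling any point [x] into the ball of radius [c] gives [L_i(a) >= s ||x - a x||] with
   [s > 0] independent of [i].  An element [a] then either moves [x] by a definite amount
   (so [L_i(a)] is large) or sends it close to [x], hence far from [y]; either way
   [d_{L_i}(x, y) >= s ||x - y|| / (1 + s)] for every [i], and the bound passes to the limit. *)
From Stdlib Require Import Reals Lra Lia Classical ClassicalEpsilon FunctionalExtensionality.
Open Scope R_scope.

Lemma vec_ext n (u v : vec n) : (forall k, u k = v k) -> u = v.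
Proof. exact (functional_extensionality u v). Qed.

Lemma vsub_self n (u : vec n) : vsub u u = vzero.
Proof. apply vec_ext; intro; unfold vsub, vzero; ring. Qed.

Section Norm.

Variables (n : nat) (N : vec n -> R).
Hypothesis HN : is_norm N.

Lemma norm_vzero : N vzero = 0.
Proof.
  destruct HN as [_ [_ [Nsc _]]].
  replace (@vzero n) with (vscale 0 (@vzero n))
    by (apply vec_ext; intro; unfold vscale, vzero; ring).
  rewrite Nsc, Rabs_R0; ring.
Qed.

Lemma norm_vsub0l (u : vec n) : N (vsub vzero u) = N u.
Proof.
  destruct HN as [_ [_ [Nsc _]]].
  replace (vsub vzero u) with (vscale (-1) u)
    by (apply vec_ext; intro; unfold vscale, vsub, vzero; ring).
  rewrite Nsc, Rabs_left by lra; ring.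
Qed.

Lemma norm_vsub_gt0 (u v : vec n) : u <> v -> 0 < N (vsub u v).
Proof.
  destruct HN as [Npos [Ndef _]]; intro Huv.
  destruct (Npos (vsub u v)) as [Hlt | Heq]; [exact Hlt |].
  exfalso; apply Huv, vec_ext; intro k.
  assert (Hk : vsub u v k = vzero k) by (rewrite (Ndef _ (eq_sym Heq)); reflexivity).
  unfold vsub, vzero in Hk; lra.
Qed.

Lemma norm_vsub_triangle (u v w : vec n) : N (vsub u w) <= N (vsub u v) + N (vsub v w).
Proof.
  destruct HN as [_ [_ [_ Ntri]]].
  replace (vsub u w) with (vadd (vsub u v) (vsub v w))
    by (apply vec_ext; intro; unfold vadd, vsub; ring).
  apply Ntri.
Qed.

End Norm.

Lemma infR_is_glb (E : R -> Prop) :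
  (exists x, E x) -> is_lower_bound E 0 -> is_glb E (infR E).
Proof.
  intros [x0 Hx0] Hlb; unfold infR; apply epsilon_spec.
  set (E' := fun y => E (- y)).
  assert (Hbound : bound E') by (exists 0; intros y Hy; specialize (Hlb _ Hy); lra).
  assert (Hne : exists y, E' y)
    by (exists (- x0); unfold E'; rewrite Ropp_involutive; exact Hx0).
  destruct (completeness E' Hbound Hne) as [m [Hub Hleast]].
  exists (- m); split.
  - intros x Hx.
    assert (HE' : E' (- x)) by (unfold E'; rewrite Ropp_involutive; exact Hx).
    specialize (Hub _ HE'); lra.
  - intros b Hb.
    assert (m <= - b) by (apply Hleast; intros y Hy; specialize (Hb _ Hy); lra).
    lra.
Qed.

Lemma max_le_sqrt_sum_sq l m : 0 <= l -> 0 <= m -> Rmax l m <= sqrt (l ^ 2 + m ^ 2).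
Proof.
  intros Hl Hm; apply Rmax_lub;
    [rewrite <- (sqrt_pow2 l Hl) at 1 | rewrite <- (sqrt_pow2 m Hm) at 1];
    apply sqrt_le_1_alt; nra.
Qed.

(* Either [t >= D/(1+s)], so [l >= s t] is large, or [t < D/(1+s)] and [m >= D - t] is large. *)
Lemma displacement_tradeoff s D t l m :
  0 < s -> 0 <= l -> 0 <= m -> D <= t + m -> s * t <= l ->
  s * D / (1 + s) <= sqrt (l ^ 2 + m ^ 2).
Proof.
  intros Hs Hl Hm HD Ht.
  apply Rle_trans with (Rmax l m); [| exact (max_le_sqrt_sum_sq l m Hl Hm)].
  apply Rmult_le_reg_r with (1 + s); [lra |].
  replace (s * D / (1 + s) * (1 + s)) with (s * D) by (field; lra).
  destruct (Rle_or_lt m l);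
    [rewrite Rmax_left by lra | rewrite Rmax_right by lra]; nra.
Qed.

Section HolonomicMetric.

Variables (n : nat) (N : vec n -> R) (H : (vec n -> vec n) -> Prop)
  (L : (vec n -> vec n) -> R).
Hypothesis HH : subgroup_O N H.

Lemma holonomic_metric_glb (u v : vec n) :
  is_glb (fun r => exists a, H a /\ r = sqrt ((L a) ^ 2 + (N (vsub (a u) v)) ^ 2))
    (holonomic_metric N H L u v).
Proof.
  destruct HH as [_ [Hid _]]; apply infR_is_glb.
  - eexists; exists (fun v => v); split; [exact Hid | reflexivity].
  - intros r [a [_ ->]]; apply sqrt_pos.
Qed.

Lemma holonomic_metric_le (a : vec n -> vec n) (u v : vec n) : H a ->
  holonomic_metric N H L u v <= sqrt ((L a) ^ 2 + (N (vsub (a u) v)) ^ 2).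
Proof. intro Ha; apply (proj1 (holonomic_metric_glb u v)); exists a; auto. Qed.

Lemma holonomic_metric_ge (k : R) (u v : vec n) :
  (forall a, H a -> k <= sqrt ((L a) ^ 2 + (N (vsub (a u) v)) ^ 2)) ->
  k <= holonomic_metric N H L u v.
Proof. intro Hk; apply (proj2 (holonomic_metric_glb u v)); intros r [a [Ha ->]]; auto. Qed.

Hypothesis HN : is_norm N.
Hypothesis HL : group_norm H L.

Lemma holonomic_metric_orbit_le (a : vec n -> vec n) (u : vec n) : H a ->
  holonomic_metric N H L u (a u) <= L a.
Proof.
  intro Ha; destruct HL as [Lpos _].
  eapply Rle_trans; [exact (holonomic_metric_le a u (a u) Ha) |].
  rewrite vsub_self, (norm_vzero n N HN), pow_i, Rplus_0_r by lia.
  rewrite sqrt_pow2 by exact (Lpos a Ha); lra.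
Qed.

Lemma group_norm_ge_displacement (c : R) (a : vec n -> vec n) (v : vec n) :
  holrad_ge N H L vzero c -> H a -> N v < c -> N (vsub v (a v)) <= L a.
Proof.
  intros Hrad Ha Hv.
  destruct (Hrad (N v) Hv) as [R0 [HvR0 [_ Hflat]]].
  assert (Hiso : N (a v) = N v) by exact (proj2 (proj1 HH a Ha) v).
  rewrite <- Hflat; rewrite ?(norm_vsub0l n N HN), ?Hiso; auto.
  exact (holonomic_metric_orbit_le a v Ha).
Qed.

Lemma group_norm_ge_scaled_displacement (c s : R) (a : vec n -> vec n) (x : vec n) :
  holrad_ge N H L vzero c -> H a -> 0 < s -> s * N x < c ->
  s * N (vsub x (a x)) <= L a.
Proof.
  intros Hrad Ha Hs Hx; destruct HN as [_ [_ [Nsc _]]].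
  assert (Hscale : vsub (vscale s x) (a (vscale s x)) = vscale s (vsub x (a x))).
  { rewrite (proj2 (proj1 (proj1 HH a Ha))).
    apply vec_ext; intro; unfold vscale, vsub; ring. }
  rewrite <- (Rabs_right s) by lra; rewrite <- Nsc, <- Hscale.
  apply (group_norm_ge_displacement c); [exact Hrad | exact Ha |].
  rewrite Nsc, Rabs_right by lra; exact Hx.
Qed.

Lemma holonomic_metric_ge_scaled_dist (s : R) (x y : vec n) : 0 < s ->
  (forall a, H a -> s * N (vsub x (a x)) <= L a) ->
  s * N (vsub x y) / (1 + s) <= holonomic_metric N H L x y.
Proof.
  intros Hs Hdisp; apply holonomic_metric_ge; intros a Ha.
  apply (displacement_tradeoff s _ (N (vsub x (a x)))); auto.
  - exact (proj1 HL a Ha).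
  - exact (proj1 HN _).
  - exact (norm_vsub_triangle n N HN x (a x) y).
Qed.

End HolonomicMetric.

Lemma compact_VV_singleton n (N : vec n -> R) (p : vec n * vec n) :
  compact_VV N (fun q => q = p).
Proof.
  intros I U _ Hcov; destruct (Hcov p eq_refl) as [j Hj].
  exists (cons j nil); intros q ->; exists j; split; [left; reflexivity | exact Hj].
Qed.

Lemma unif_conv_compacts_lower_bound n (N : vec n -> R) d dinf (x y : vec n) (k : R) :
  unif_conv_compacts N d dinf -> (forall i, k <= d i x y) -> k <= dinf x y.
Proof.
  intros Hconv Hk; apply Rnot_lt_le; intro Hlt.
  destruct (Hconv _ (compact_VV_singleton n N (x, y)) (k - dinf x y) ltac:(lra))
    as [i0 Hi0].
  specialize (Hi0 i0 (le_n _) (x, y) eq_refl); specialize (Hk i0); simpl in Hi0.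
  assert (Habs := Rle_abs (d i0 x y - dinf x y)); lra.
Qed.

Lemma scale_into_ball n (N : vec n -> R) (c : R) (x : vec n) :
  is_norm N -> 0 < c -> exists s, 0 < s /\ s * N x < c.
Proof.
  intros HN Hc; assert (Nx := proj1 HN x).
  exists (c / (N x + 1)); split; [apply Rdiv_lt_0_compat; lra |].
  apply Rmult_lt_reg_r with (N x + 1); [lra |].
  replace (c / (N x + 1) * N x * (N x + 1)) with (c * N x) by (field; lra).
  nra.
Qed.

Theorem mainTheorem16 (n : nat) (N : vec n -> R) (H : (vec n -> vec n) -> Prop)
  (L : nat -> (vec n -> vec n) -> R) (dinf : vec n -> vec n -> R) (c : R) :
  is_norm N ->
  subgroup_O N H ->
  (forall i, holonomic N H (L i)) ->
  unif_conv_compacts N (fun i => holonomic_metric N H (L i)) dinf ->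
  semi_metric dinf ->
  0 < c ->
  (forall i, holrad_ge N H (L i) vzero c) ->
  forall x y, dinf x y = 0 -> x = y.
Proof.
  intros HN HH Hhol Hconv _ Hc Hrad x y Hd.
  apply NNPP; intro Hxy.
  assert (HD := norm_vsub_gt0 n N HN x y Hxy).
  destruct (scale_into_ball n N c x HN Hc) as [s [Hs Hsx]].
  assert (Hlow : forall i, s * N (vsub x y) / (1 + s) <= holonomic_metric N H (L i) x y).
  { intro i; destruct (Hhol i) as [_ [HLi _]].
    apply holonomic_metric_ge_scaled_dist; auto.
    intros a Ha; exact (group_norm_ge_scaled_displacement n N H (L i) HH HN HLi c s a x
                          (Hrad i) Ha Hs Hsx). }
  assert (Hpos : 0 < s * N (vsub x y) / (1 + s))
    by (apply Rdiv_lt_0_compat; [apply Rmult_lt_0_compat |]; lra).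
  assert (Hlim := unif_conv_compacts_lower_bound n N _ _ x y _ Hconv Hlow).
  simpl in Hlim; lra.
Qed.
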